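(* Let $\Sigma$ be a closed oriented surface and let $\mathcal T$ be a coherent double circuit configuration on $\Sigma$ in $\mathbb P^d$ ($d\ge 2$). Let $\mathcal T'$ be obtained from $\mathcal T$ by one of the moves (M1) (degree-two vertex removal or addition) or (M2) (urban renewal) described below, where the data are generic, so that all labels of $\mathcal T'$ are well defined (every intersection and span used below is a point, respectively a hyperplane) and $\mathcal T'$ is again a double circuit configuration in which all pairings entering the multi-ratios of its faces are nonzero. Then $\mathcal T'$ is coherent.
   Context: A tiling of a closed oriented surface $\Sigma$ is a bipartite graph $\Gamma$ (vertices colored white and black, each edge joining vertices of different colors) embedded in $\Sigma$ so that every face (connected component of $\Sigma\setminus\Gamma$) is an open disk, together with an assignment of a point of $\mathbb P^d$ to every white vertex and a hyperplane of $\mathbb P^d$ to every black vertex. Each face is a $2n$-gon whose boundary vertices alternate in color. Multi-ratio: for points $A_1,\dots,A_n$ and hyperplanes $\ell_1,\dots,\ell_n$ of $\mathbb P^d$, choose representing vectors $\mathbf A_i\in\mathbb C^{d+1}$ and covectors $\boldsymbol\ell_i$, and set $[A_1,\ell_1,\dots,A_n,\ell_n]=\frac{\boldsymbol\ell_1(\mathbf A_1)\cdots\boldsymbol\ell_n(\mathbf A_n)}{\boldsymbol\ell_1(\mathbf A_2)\cdots\boldsymbol\ell_n(\mathbf A_1)}$ (indices mod $n$; this is independent of the lifts). A face is coherent if the multi-ratio of the labels of its boundary vertices, read in clockwise order (with respect to the orientation of $\Sigma$), equals $1$; a tiling is coherent if every face is coherent. A circuit in a projective space is a linearly dependent set of points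 no proper subset of which is linearly dependent (e.g. two equal points; three pairwise distinct collinear points). Hyperplanes are regarded as points of the dual projective space. A tiling is a double circuit configuration if for every vertex, the labels of its neighbors form a circuit. Moves. (M1) Degree-two vertex removal: if a white vertex labeled $A$ has degree 2 with distinct black neighbors $u,u'$ (which, by the circuit condition, carry the same hyperplane $\ell$), delete this white vertex and its two edges and merge $u,u'$ into one black vertex labeled $\ell$ adjacent to all former neighbors of $u$ and $u'$. The same with colors (points/hyperplanes) interchanged. Degree-two vertex addition is the inverse operation. (M2) Urban renewal: suppose there is a quadrilateral face with boundary vertices, in cyclic order, $A$ (white), $c$ (black), $B$ (white), $d$ (black), where $A$'s other black neighbors are labeled $a_1,\dots,a_m$, $c$'s other white neighbors $C_1,\dots,C_k$, $B$'s other black neighbors $b_1,\dots,b_n$, $d$'s other white neighbors $D_1,\dots,D_l$. Delete the four edges $Ac,cB,Bd,dA$; insert new vertices $g$ (black), $E$ (white), $h$ (black), $F$ (white) forming a new quadrilateral face with cycle $g,E,h,F$, and add edges $A g$, $c E$, $B h$, $d F$ (so the square face is replaced by an inner square and four surrounding quadrilateral faces). The new labels are $E=\langle A,B\rangle\cap\langle C_1,\dots,C_k\rangle$, $F=\langle A,B\rangle\cap\langle D_1,\dots,D_l\rangle$, $g=\langle c\cap d,\ a_1\cap\dots\cap a_m\rangle$, $h=\langle c\cap d,\ b_1\cap\dots\cap b_n\rangle$, where $\langle\cdot\rangle$ denotes span; all other labels are unchanged. *)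

(* Tilings of closed oriented surfaces encoded as
   bipartite rotation systems (combinatorial maps). *)
From HB Require Import structures.
From mathcomp Require Import all_boot all_order all_algebra.
From mathcomp Require Import fingroup perm complex.
From mathcomp Require Import Rstruct.

Unset Implicit Arguments.
Unset Strict Implicit.
Unset Printing Implicit Defensive.

Import Order.TTheory GRing.Theory Num.Theory.
Local Open Scope ring_scope.

Definition Cplx : fieldType := (Rdefinitions.R)[i].

Section Tilings.
Variable K : fieldType.
Variable n : nat.  (* n = d+1 : vectors of K^(d+1) represent points of P^d *)

(* pairing of a covector l (a hyperplane) with a vector A (a point): l(A) *)
Definition pairing (l A : 'rV[K]_n) : K := \sum_(i < n) l 0 i * A 0 i.

Definition proj_eq (v v' : 'rV[K]_n) : Prop :=
  exists2 c : K, c != 0 & v' = c *: v.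

Definition multi_ratio (As ls : seq 'rV[K]_n) : K :=
  let m := size As in
  (\prod_(i < m) pairing ls`_i As`_i) /
  (\prod_(i < m) pairing ls`_i As`_(i.+1 %% m)).

(* A tiling: white vertices Wt, black vertices Bt, edges Et; each edge joins
   the white vertex [wv e] to the black vertex [bv e].  [wrot] (resp. [brot])
   is the counterclockwise (w.r.t. the orientation of the surface) successor
   of an edge around its white (resp. black) endpoint.  Such a rotation
   system determines the closed oriented surface and the cellular embedding
   (all faces open disks).  Labels: a representing vector for the point of
   each white vertex, a representing covector for the hyperplane of each
   black vertex. *)
Record tiling : Type := Tiling {
  Wt : finType; Bt : finType; Et : finType;
  wv : Et -> Wt; bv : Et -> Bt;
  wrot : {perm Et}; brot : {perm Et};
  ptlab : Wt -> 'rV[K]_n; hplab : Bt -> 'rV[K]_n }.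

Definition is_tiling (T : tiling) : Prop :=
  [/\ (forall x, exists e, wv T e = x),
      (forall y, exists e, bv T e = y),
      (forall e e', wv T e = wv T e' <-> fconnect (wrot T) e e'),
      (forall e e', bv T e = bv T e' <-> fconnect (brot T) e e')
    & (forall x, ptlab T x != 0) /\ (forall y, hplab T y != 0)].

(* faces: orbits of e |-> wrot (brot e); reading such an orbit from e gives
   the boundary A_1, l_1, A_2, l_2, ... of the face in clockwise order *)
Definition face_step (T : tiling) (e : Et T) : Et T := wrot T (brot T e).
Definition face_len (T : tiling) (e : Et T) : nat := fingraph.order (face_step T) e.
Definition face_points (T : tiling) (e : Et T) : seq 'rV[K]_n :=
  [seq ptlab T (wv T (iter i (face_step T) e)) | i <- iota 0 (face_len T e)].
Definition face_hyperplanes (T : tiling) (e : Et T) : seq 'rV[K]_n :=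
  [seq hplab T (bv T (iter i (face_step T) e)) | i <- iota 0 (face_len T e)].

Definition coherent_face (T : tiling) (e : Et T) : Prop :=
  multi_ratio (face_points T e) (face_hyperplanes T e) = 1.
Definition coherent (T : tiling) : Prop := forall e : Et T, coherent_face T e.

Definition dependent {I : finType} (S : {set I}) (v : I -> 'rV[K]_n) : Prop :=
  exists c : I -> K, (exists2 i, i \in S & c i != 0) /\
                     \sum_(i in S) c i *: v i = 0.
Definition circuit {I : finType} (S : {set I}) (v : I -> 'rV[K]_n) : Prop :=
  dependent S v /\ forall S' : {set I}, S' \proper S -> ~ dependent S' v.

Definition white_nbrs (T : tiling) (x : Wt T) : {set Bt T} :=
  bv T @: [set e | wv T e == x].
Definition black_nbrs (T : tiling) (y : Bt T) : {set Wt T} :=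
  wv T @: [set e | bv T e == y].

Definition double_circuit (T : tiling) : Prop :=
  (forall x : Wt T, circuit (white_nbrs T x) (hplab T)) /\
  (forall y : Bt T, circuit (black_nbrs T y) (ptlab T)).

Definition swap_colors (T : tiling) : tiling :=
  @Tiling (Bt T) (Wt T) (Et T) (bv T) (wv T) (brot T) (wrot T)
          (hplab T) (ptlab T).

(* (M1) removal of a white vertex x0 of degree two with edges e1, e2 to
   distinct black vertices u = bv e1, u' = bv e2, which get merged.
   fE, fW identify edges / white vertices of T' with those of T that
   survive; fB maps black vertices of T onto those of T', identifying
   exactly u and u'. *)
Definition remove_white_deg2 (T T' : tiling) : Prop :=
  exists (x0 : Wt T) (e1 e2 : Et T)
         (fE : Et T' -> Et T) (fW : Wt T' -> Wt T) (fB : Bt T -> Bt T'),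
  [/\ [/\ e1 != e2, wv T e1 = x0, wv T e2 = x0,
          (forall e, wv T e = x0 -> e = e1 \/ e = e2) & bv T e1 != bv T e2],
      [/\ injective fE, (forall e', fE e' != e1 /\ fE e' != e2)
        & (forall e, e != e1 -> e != e2 -> exists e', fE e' = e)],
      [/\ injective fW, (forall x', fW x' != x0)
        & (forall x, x != x0 -> exists x', fW x' = x)],
      [/\ (forall y', exists y, fB y = y'),
          (forall y y', fB y = fB y' <->
             [\/ y = y', y = bv T e1 /\ y' = bv T e2
                       | y = bv T e2 /\ y' = bv T e1])
        & (forall e', wv T (fE e') = fW (wv T' e') /\
                      fB (bv T (fE e')) = bv T' e')] &
      [/\ (forall e', fE (wrot T' e') = wrot T (fE e')),
          (forall e', fE (brot T' e') =
             let x := brot T (fE e') in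
             if x == e1 then
               (if brot T e2 == e2 then brot T e1 else brot T e2)
             else if x == e2 then
               (if brot T e1 == e1 then brot T e2 else brot T e1)
             else x),
          (forall x', proj_eq (ptlab T (fW x')) (ptlab T' x'))
        & (forall y, proj_eq (hplab T y) (hplab T' (fB y)))]].

Definition move_M1 (T T' : tiling) : Prop :=
  [\/ remove_white_deg2 T T', remove_white_deg2 T' T,
      remove_white_deg2 (swap_colors T) (swap_colors T')
    | remove_white_deg2 (swap_colors T') (swap_colors T)].

(* subspaces of K^n as row spaces of square matrices (mxalgebra) *)
Definition span_pts {I : finType} (S : {set I}) (v : I -> 'rV[K]_n) : 'M[K]_n :=
  (\sum_(i in S) <<v i>>)%MS.
Definition hyperplane (l : 'rV[K]_n) : 'M[K]_n := kermx l^T.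
Definition meet_hyps {I : finType} (S : {set I}) (l : I -> 'rV[K]_n) : 'M[K]_n :=
  (\bigcap_(i in S) hyperplane (l i))%MS.

Definition is_meet_point (X Y : 'M[K]_n) (v : 'rV[K]_n) : Prop :=
  [/\ \rank (X :&: Y)%MS = 1%N, v != 0 & (v <= X :&: Y)%MS].
Definition is_join_hyperplane (X Y : 'M[K]_n) (l : 'rV[K]_n) : Prop :=
  [/\ \rank (X + Y)%MS = n.-1, l != 0 & (X + Y <= hyperplane l)%MS].

(* (M2) urban renewal at the quadrilateral face whose boundary, read from
   the edge e1, is A = wv e1, c = bv e1, B = wv e2, d = bv e2, with edges
   e1 = Ac, f1 = cB, e2 = Bd, f2 = dA.  The edges of T' are the images
   under iE of the other edges of T plus eight new edges
   nAg ncE nBh ndF (connectors) and ngE nEh nhF nFg (new square);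
   new white vertices xE xF, new black vertices yg yh. *)
Definition urban_renewal (T T' : tiling) : Prop :=
  exists e1 : Et T,
  let f1 := brot T e1 in let e2 := wrot T f1 in let f2 := brot T e2 in
  let A := wv T e1 in let c := bv T e1 in
  let B := wv T e2 in let d := bv T e2 in
  let kept := fun e => e \notin [:: e1; f1; e2; f2] in
  exists (iE : Et T -> Et T') (iW : Wt T -> Wt T') (iB : Bt T -> Bt T')
         (xE xF : Wt T') (yg yh : Bt T')
         (nAg ncE nBh ndF ngE nEh nhF nFg : Et T'),
  let news := [:: nAg; ncE; nBh; ndF; ngE; nEh; nhF; nFg] in
  [/\ (* the face is a quadrilateral with distinct vertices *)
      [/\ wrot T f2 = e1, A != B & c != d],
      [/\ (forall e e', kept e -> kept e' -> iE e = iE e' -> e = e'),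
          uniq news, (forall e, kept e -> iE e \notin news)
        & (forall e', e' \in news \/ exists2 e, kept e & iE e = e')],
      [/\ [/\ injective iW, xE != xF, (forall x, iW x != xE /\ iW x != xF)
            & (forall x', [\/ x' = xE, x' = xF | exists x, iW x = x'])],
          [/\ injective iB, yg != yh, (forall y, iB y != yg /\ iB y != yh)
            & (forall y', [\/ y' = yg, y' = yh | exists y, iB y = y'])],
          (forall e, kept e ->
             wv T' (iE e) = iW (wv T e) /\ bv T' (iE e) = iB (bv T e))
        & [/\ wv T' nAg = iW A /\ bv T' nAg = yg,
              wv T' ncE = xE /\ bv T' ncE = iB c,
              wv T' nBh = iW B /\ bv T' nBh = yh,
              wv T' ndF = xF /\ bv T' ndF = iB d &
              [/\ wv T' ngE = xE /\ bv T' ngE = yg,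
                  wv T' nEh = xE /\ bv T' nEh = yh,
                  wv T' nhF = xF /\ bv T' nhF = yh &
                  wv T' nFg = xF /\ bv T' nFg = yg]]],
      [/\ (forall e, kept e -> wrot T' (iE e) =
             if wrot T e == f2 then nAg
             else if wrot T e == f1 then nBh else iE (wrot T e)),
          wrot T' nAg = (if wrot T e1 == f2 then nAg else iE (wrot T e1)),
          wrot T' nBh = (if wrot T e2 == f1 then nBh else iE (wrot T e2)),
          [/\ wrot T' ncE = ngE, wrot T' ngE = nEh & wrot T' nEh = ncE]
        & [/\ wrot T' ndF = nhF, wrot T' nhF = nFg & wrot T' nFg = ndF]] /\
      [/\ (forall e, kept e -> brot T' (iE e) =
             if brot T e == e1 then ncE
             else if brot T e == e2 then ndF else iE (brot T e)),
          brot T' ncE = (if brot T f1 == e1 then ncE else iE (brot T f1)),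
          brot T' ndF = (if brot T f2 == e2 then ndF else iE (brot T f2)),
          [/\ brot T' ngE = nAg, brot T' nAg = nFg & brot T' nFg = ngE]
        & [/\ brot T' nEh = nhF, brot T' nhF = nBh & brot T' nBh = nEh]] &
      [/\ (forall x, proj_eq (ptlab T x) (ptlab T' (iW x))),
          (forall y, proj_eq (hplab T y) (hplab T' (iB y))),
          (* E = <A,B> ∩ <C_1..C_k>,  F = <A,B> ∩ <D_1..D_l> *)
          is_meet_point (<<ptlab T A>> + <<ptlab T B>>)%MS
            (span_pts (wv T @: [set e | (bv T e == c) && (e \notin [:: e1; f1])])
                      (ptlab T))
            (ptlab T' xE),
          is_meet_point (<<ptlab T A>> + <<ptlab T B>>)%MS
            (span_pts (wv T @: [set e | (bv T e == d) && (e \notin [:: e2; f2])])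
                      (ptlab T))
            (ptlab T' xF) &
          (* g = <c ∩ d, a_1 ∩ .. ∩ a_m>,  h = <c ∩ d, b_1 ∩ .. ∩ b_n> *)
          is_join_hyperplane (hyperplane (hplab T c) :&: hyperplane (hplab T d))%MS
            (meet_hyps (bv T @: [set e | (wv T e == A) && (e \notin [:: e1; f2])])
                       (hplab T))
            (hplab T' yg) /\
          is_join_hyperplane (hyperplane (hplab T c) :&: hyperplane (hplab T d))%MS
            (meet_hyps (bv T @: [set e | (wv T e == B) && (e \notin [:: f1; e2])])
                       (hplab T))
            (hplab T' yh)]].

End Tilings.

Arguments Tiling {K n}.
Arguments Wt {K n}.
Arguments Bt {K n}.
Arguments Et {K n}.
Arguments wv {K n}.
Arguments bv {K n}.
Arguments wrot {K n}.
Arguments brot {K n}.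
Arguments ptlab {K n}.
Arguments hplab {K n}.
Arguments is_tiling {K n}.
Arguments coherent {K n}.
Arguments double_circuit {K n}.
Arguments move_M1 {K n}.
Arguments urban_renewal {K n}.
Arguments pairing {K n}.
Arguments proj_eq {K n}.
Arguments multi_ratio {K n}.
Arguments face_points {K n}.
Arguments face_hyperplanes {K n}.
Arguments coherent_face {K n}.
Arguments dependent {K n I}.
Arguments circuit {K n I}.

(* Write p(x) for the pairing of the two labels of an edge x.  Along a face
   with edges x_1, x_2, ..., the edge brot(x_i) joins the black vertex of x_i
   to the white vertex of x_(i+1), so the multi-ratio of the face is the
   product of the ratios p(x_i) / p(brot x_i).  Hence the tiling is coherent
   iff these ratios form a coboundary along the faces, i.e. iff there is a
   nowhere-zero gauge phi with p(x_i) phi(x_i) = p(brot x_i) phi(x_(i+1)).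
   Rescaling labels multiplies p by vertex factors, which a gauge absorbs, and
   each move changes the tiling only locally, so a gauge of T can be
   transported to T'.
   For a degree-two removal, the two merged black labels are proportional and
   the gauge skips the removed corner.  For urban renewal, E and F lie on the
   line AB, and every hyperplane through c ∩ d meets AB in one and the same
   point (where c and d meet it, by coherence of the face AcBd); so c, d, g, h
   restrict to proportional forms on AB, which gives exactly the identities
   needed on the five new faces. *)

From HB Require Import structures.
From mathcomp Require Import all_boot all_order all_algebra.
From mathcomp Require Import fingroup perm complex.
From mathcomp Require Import Rstruct.
From mathcomp Require Import ring.
Set Implicit Arguments.
Unset Strict Implicit.
Import GRing.Theory.
Local Open Scope ring_scope.

Section Pairings.
Variables (K : fieldType) (n : nat).
Implicit Types l v A B : 'rV[K]_n.

Lemma pairingC l v : pairing l v = pairing v l.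
Proof. by rewrite /pairing; apply: eq_bigr => i _; rewrite mulrC. Qed.

Lemma pairingDr l A B : pairing l (A + B) = pairing l A + pairing l B.
Proof. by rewrite /pairing -big_split; apply: eq_bigr => i _; rewrite mxE mulrDr. Qed.

Lemma pairingZr l v a : pairing l (a *: v) = a * pairing l v.
Proof. by rewrite /pairing mulr_sumr; apply: eq_bigr => i _; rewrite mxE mulrCA. Qed.

Lemma pairingZl l v a : pairing (a *: l) v = a * pairing l v.
Proof. by rewrite pairingC pairingZr pairingC. Qed.

Lemma pairing_comb l A B s t :
  pairing l (s *: A + t *: B) = s * pairing l A + t * pairing l B.
Proof. by rewrite pairingDr !pairingZr. Qed.

Lemma sub_hyperplane l v : (v <= hyperplane K n l)%MS = (pairing l v == 0).
Proof.
rewrite /hyperplane sub_kermx; apply/eqP/eqP => [/matrixP/(_ 0 0)|h].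
  by rewrite !mxE => <-; apply: eq_bigr => i _; rewrite mxE mulrC.
apply/matrixP => i j; rewrite !ord1 !mxE -[RHS]h.
by apply: eq_bigr => k _; rewrite mxE mulrC.
Qed.

Lemma sub_span2P A B v : (v <= <<A>> + <<B>>)%MS ->
  exists s t, v = s *: A + t *: B.
Proof.
case/sub_addsmxP => [[u1 u2] /= ->].
have /sub_rVP[s ->] : (u1 *m <<A>> <= A)%MS.
  by apply: submx_trans (submxMl _ _) _; rewrite genmxE.
have /sub_rVP[t ->] : (u2 *m <<B>> <= B)%MS.
  by apply: submx_trans (submxMl _ _) _; rewrite genmxE.
by exists s, t.
Qed.

Lemma span2_subl A B : (A <= <<A>> + <<B>>)%MS.
Proof. by apply: submx_trans (addsmxSl _ _); rewrite genmxE. Qed.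

Lemma span2_subr A B : (B <= <<A>> + <<B>>)%MS.
Proof. by apply: submx_trans (addsmxSr _ _); rewrite genmxE. Qed.

Lemma pairing_exchange A B l m v w a b : b != 0 ->
  pairing l (a *: A + b *: B) = 0 -> pairing m (a *: A + b *: B) = 0 ->
  (v <= <<A>> + <<B>>)%MS -> (w <= <<A>> + <<B>>)%MS ->
  pairing l v * pairing m w = pairing l w * pairing m v.
Proof.
rewrite !pairing_comb => b0 hl hm /sub_span2P[s [t ->]] /sub_span2P[s' [t' ->]].
have solveB p : a * pairing p A + b * pairing p B = 0 ->
    pairing p B = - a * pairing p A / b.
  by move/eqP; rewrite addrC addr_eq0 => /eqP h; rewrite -[LHS](mulKf b0) h; field.
by rewrite !pairing_comb (solveB _ hl) (solveB _ hm); field.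
Qed.

Lemma proj_eq_scalars (I : finType) (v v' : I -> 'rV[K]_n) :
  (forall i, proj_eq (v i) (v' i)) ->
  exists2 c : I -> K, forall i, c i != 0 & forall i, v' i = c i *: v i.
Proof. by move/fin_all_exists2. Qed.

End Pairings.

Section Gauges.
Variables (K : fieldType) (n : nat).
Implicit Types T : tiling K n.

Local Notation face_step := (face_step K n).
Local Notation face_len := (face_len K n).

Definition edge_pairing T (e : Et T) : K :=
  pairing (hplab T (bv T e)) (ptlab T (wv T e)).
Arguments edge_pairing : clear implicits.

Definition gauge_eq T (phi : Et T -> K) (x : Et T) : Prop :=
  edge_pairing T x * phi x = edge_pairing T (brot T x) * phi (face_step T x).

Definition face_gauge T : Prop :=
  exists2 phi : Et T -> K, forall x, phi x != 0 & forall x, gauge_eq phi x.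

Lemma wv_wrot T : is_tiling T -> forall e, wv T (wrot T e) = wv T e.
Proof. by case=> _ _ H _ _ e; symmetry; apply/H; apply: fconnect1. Qed.

Lemma bv_brot T : is_tiling T -> forall e, bv T (brot T e) = bv T e.
Proof. by case=> _ _ _ H _ e; symmetry; apply/H; apply: fconnect1. Qed.

Lemma face_step_inj T : injective (face_step T).
Proof. by move=> x y /perm_inj /perm_inj. Qed.

Lemma iter_face_len T (e : Et T) : iter (face_len T e) (face_step T) e = e.
Proof. exact/iter_order/face_step_inj. Qed.

Lemma multi_ratio_face T (e : Et T) : is_tiling T ->
  multi_ratio (face_points T e) (face_hyperplanes T e) =
  (\prod_(i < face_len T e) edge_pairing T (iter i (face_step T) e)) /
  (\prod_(i < face_len T e) edge_pairing T (brot T (iter i (face_step T) e))).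
Proof.
move=> tT; rewrite /multi_ratio size_map size_iota; congr (_ / _).
  apply: eq_bigr => i _.
  by rewrite /face_points /face_hyperplanes !(nth_map 0%N) ?size_iota // nth_iota.
apply: eq_bigr => i _; have lt_i := ltn_ord i.
have len_gt0 : (0 < face_len T e)%N := fingraph.order_gt0 _ _.
rewrite /face_points /face_hyperplanes !(nth_map 0%N) ?size_iota ?ltn_pmod //.
rewrite !nth_iota ?ltn_pmod // !add0n /edge_pairing bv_brot //.
suff -> : iter (i.+1 %% face_len T e) (face_step T) e = iter i.+1 (face_step T) e.
  by rewrite iterS /face_step wv_wrot.
case: (ltnP i.+1 (face_len T e)) => h; first by rewrite modn_small.
have -> : i.+1 = face_len T e by apply/eqP; rewrite eqn_leq h andbT.
by rewrite modnn iter_face_len.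
Qed.

Lemma coherent_edge_pairing_neq0 T : is_tiling T -> coherent T ->
  forall e, edge_pairing T e != 0.
Proof.
move=> tT coh e; apply/eqP => pe0; have := coh e.
rewrite /coherent_face multi_ratio_face //.
rewrite /face_len -(fingraph.orderSpred (face_step T)) big_ord_recl /= pe0.
by rewrite !mul0r => /eqP; rewrite eq_sym oner_eq0.
Qed.

Lemma gauge_coherent T : is_tiling T -> (forall e, edge_pairing T e != 0) ->
  face_gauge T -> coherent T.
Proof.
move=> tT pe0 [phi phi0 gauge] e; rewrite /coherent_face multi_ratio_face //.
set f := face_step T; set m := face_len T e.
have den0 : \prod_(i < m) edge_pairing T (brot T (iter i f e)) != 0.
  by apply/prodf_neq0 => i _.
have phis0 : \prod_(i < m) phi (iter i f e) != 0 by apply/prodf_neq0 => i _.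
apply/eqP; rewrite (can2_eq (divfK den0) (mulfK den0)) mul1r; apply/eqP.
have shift : \prod_(i < m) phi (iter i f e) = \prod_(i < m) phi (iter i.+1 f e).
  rewrite /m; move: (iter_face_len e); rewrite -/f.
  case: (face_len T e) => [|k] cyc; first by rewrite !big_ord0.
  by rewrite [LHS]big_ord_recl [RHS]big_ord_recr /= -iterS cyc mulrC.
apply: (mulIf phis0); rewrite {2}shift -!big_split /=.
by apply: eq_bigr => i _; exact: gauge.
Qed.

(* The gauge is the running product of the ratios along each face orbit,
   started at the root of the orbit; coherence closes it up. *)
Lemma coherent_gauge T : is_tiling T -> coherent T -> face_gauge T.
Proof.
move=> tT coh; have pe0 := coherent_edge_pairing_neq0 tT coh.
set f := face_step T; have f_inj : injective f := @face_step_inj T.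
pose rho x := edge_pairing T x / edge_pairing T (brot T x).
pose phi x := \prod_(i < findex f (froot f x) x) rho (iter i f (froot f x)).
have csym : connect_sym (frel f) := fconnect_sym f_inj.
have root_to x : fconnect f (froot f x) x by rewrite csym; apply: connect_root.
have froot_step x : froot f (f x) = froot f x.
  by apply/esym/eqP; rewrite (root_connect csym); apply: fconnect1.
have orbit_prod r : \prod_(i < fingraph.order f r) rho (iter i f r) = 1.
  by have := coh r; rewrite /coherent_face multi_ratio_face // -prodf_div.
have phi_step x : phi (f x) = phi x * rho x.
  rewrite /phi froot_step; set r := froot f x.
  have le_k := findex_max (root_to x); have iter_k := iter_findex (root_to x).
  set k := findex f r x in le_k iter_k *.
  case: (ltnP k.+1 (fingraph.order f r)) => h.
    have -> : findex f r (f x) = k.+1 by rewrite -{1}iter_k -iterS findex_iter.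
    by rewrite big_ord_recr /= iter_k.
  have ek : k.+1 = fingraph.order f r by apply/eqP; rewrite eqn_leq h le_k.
  have -> : f x = r by rewrite -iter_k -iterS ek iter_order.
  rewrite findex0 big_ord0.
  by have := orbit_prod r; rewrite -ek big_ord_recr /= iter_k => ->.
exists phi => [x | x]; last by rewrite /gauge_eq phi_step /rho; field.
by apply/prodf_neq0 => i _; rewrite mulf_neq0 ?invr_eq0.
Qed.

Lemma coherent_gaugeP T : is_tiling T -> (forall e, edge_pairing T e != 0) ->
  coherent T <-> face_gauge T.
Proof. by move=> tT pe0; split; [apply: coherent_gauge | apply: gauge_coherent]. Qed.

Lemma edge_pairing_swap T e : edge_pairing (swap_colors K n T) e = edge_pairing T e.
Proof. by rewrite /edge_pairing pairingC. Qed.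

Lemma edge_pairing_swap_neq0 T : (forall e, edge_pairing T e != 0) ->
  forall e, edge_pairing (swap_colors K n T) e != 0.
Proof. by move=> pe0 e; rewrite edge_pairing_swap. Qed.

Lemma is_tiling_swap T : is_tiling T -> is_tiling (swap_colors K n T).
Proof. by case=> h1 h2 h3 h4 [h5 h6]; split. Qed.

Lemma swap_colorsK T : swap_colors K n (swap_colors K n T) = T.
Proof. by case: T. Qed.

Lemma gauge_swap T : (forall e, edge_pairing T e != 0) ->
  face_gauge T -> face_gauge (swap_colors K n T).
Proof.
move=> pe0 [phi phi0 gauge].
exists (fun x => (phi (wrot T x) * edge_pairing T x)^-1) => [x | x].
  by rewrite invr_eq0 mulf_neq0.
have gx := gauge (wrot T x); rewrite /gauge_eq /face_step in gx.
rewrite /gauge_eq !edge_pairing_swap /face_step /=.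
rewrite [phi (wrot T (brot T (wrot T x))) * _]mulrC -gx.
by field; rewrite ?phi0 ?pe0.
Qed.

Lemma face_gauge_swapP T : (forall e, edge_pairing T e != 0) ->
  face_gauge (swap_colors K n T) <-> face_gauge T.
Proof.
move=> pe0; split; last exact: gauge_swap.
by move/(gauge_swap (edge_pairing_swap_neq0 pe0)); rewrite swap_colorsK.
Qed.

End Gauges.

Arguments edge_pairing {K n} T e.

Section DegreeTwoRemoval.
Variables (K : fieldType) (n : nat) (T T' : tiling K n).
Hypotheses (tiling_T : is_tiling T) (tiling_T' : is_tiling T').
Hypothesis pairing_neq0 : forall e, edge_pairing T e != 0.
Variables (x0 : Wt T) (e1 e2 : Et T).
Variables (fE : Et T' -> Et T) (fW : Wt T' -> Wt T) (fB : Bt T -> Bt T').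
Variables (al : Wt T' -> K) (be : Bt T -> K).
Hypotheses (e1_neq_e2 : e1 != e2) (wv_e1 : wv T e1 = x0) (wv_e2 : wv T e2 = x0).
Hypothesis x0_edges : forall e, wv T e = x0 -> e = e1 \/ e = e2.
Hypothesis bv_e12 : bv T e1 != bv T e2.
Hypothesis fE_inj : injective fE.
Hypothesis fE_neq : forall e', fE e' != e1 /\ fE e' != e2.
Hypothesis fE_onto : forall e, e != e1 -> e != e2 -> exists e', fE e' = e.
Hypothesis fB_merge : fB (bv T e1) = fB (bv T e2).
Hypothesis fE_ends :
  forall e', wv T (fE e') = fW (wv T' e') /\ fB (bv T (fE e')) = bv T' e'.
Hypothesis fE_wrot : forall e', fE (wrot T' e') = wrot T (fE e').
Hypotheses (al_neq0 : forall x', al x' != 0) (be_neq0 : forall y, be y != 0).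
Hypothesis ptlab_T' : forall x', ptlab T' x' = al x' *: ptlab T (fW x').
Hypothesis hplab_T' : forall y, hplab T' (fB y) = be y *: hplab T y.

Local Notation ep := (edge_pairing T).
Local Notation x0_pair a b := ((a = e1 /\ b = e2) \/ (a = e2 /\ b = e1)).

(* The black successor, after the merge, of an edge whose successor was [a]:
   [brot b], or [brot a] when [b] is alone at its black vertex. *)
Definition brot_skip (a b : Et T) : Et T :=
  if brot T b == b then brot T a else brot T b.

Definition merged_brot (e : Et T) : Et T :=
  let x := brot T e in
  if x == e1 then brot_skip e1 e2 else if x == e2 then brot_skip e2 e1 else x.

Hypothesis fE_brot : forall e', fE (brot T' e') = merged_brot (fE e').

Lemma edge_pairing_removal e' :
  edge_pairing T' e' = be (bv T (fE e')) * al (wv T' e') * ep (fE e').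
Proof.
have [wv_fE bv_fE] := fE_ends e'.
by rewrite /edge_pairing ptlab_T' -bv_fE hplab_T' wv_fE pairingZl pairingZr mulrA.
Qed.

Lemma x0_pair_sym a b : x0_pair a b -> x0_pair b a.
Proof. by case=> [] []; auto. Qed.

Lemma x0_pair_wrot a b : x0_pair a b -> wrot T a = b.
Proof.
move=> ab; have [wv_a wv_b] : wv T a = x0 /\ wv T b = x0 by case: ab => [] [-> ->].
have a_neq_b : a != b by case: ab => [] [-> ->]; rewrite // eq_sym.
have [wa | //] : wrot T a = a \/ wrot T a = b.
  have := @x0_edges (wrot T a); rewrite wv_wrot // wv_a => /(_ erefl).
  by case: ab => [] [-> ->] []; auto.
have conn : fconnect (wrot T) a b by case: tiling_T => _ _ H _ _; apply/H; rewrite wv_a.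
by have := iter_findex conn; rewrite iter_fix // => ab_eq; rewrite ab_eq eqxx in a_neq_b.
Qed.

Lemma x0_pair_bv a b : x0_pair a b -> bv T a != bv T b.
Proof. by case=> [] [-> ->]; rewrite // eq_sym. Qed.

Lemma x0_pair_merged a b :
  x0_pair a b -> be (bv T a) * ep a = be (bv T b) * ep b.
Proof.
suff merged : be (bv T e1) * ep e1 = be (bv T e2) * ep e2.
  by case=> [] [-> ->].
have := congr1 (pairing^~ (ptlab T x0)) (hplab_T' (bv T e1)).
by rewrite fB_merge hplab_T' /edge_pairing wv_e1 wv_e2 !pairingZl => ->.
Qed.

Lemma merged_brot_pair a b e : x0_pair a b -> brot T e = a ->
  merged_brot e = brot_skip a b.
Proof.
rewrite /merged_brot => ab ->; case: ab => [] [-> ->]; rewrite ?eqxx //.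
by rewrite eq_sym (negbTE e1_neq_e2).
Qed.

Definition merged_eq (psi : Et T -> K) (e : Et T) : Prop :=
  let y := merged_brot e in
  be (bv T e) * (ep e * psi e) = be (bv T y) * (ep y * psi (wrot T y)).

Definition restrict_gauge (psi : Et T -> K) (e' : Et T') : K :=
  psi (fE e') / al (wv T' e').

Lemma gauge_eq_removal psi e' :
  gauge_eq (restrict_gauge psi) e' <-> merged_eq psi (fE e').
Proof.
rewrite /gauge_eq /merged_eq /restrict_gauge /face_step fE_wrot fE_brot.
rewrite (wv_wrot tiling_T') !edge_pairing_removal fE_brot.
have al_cancel x' (b p q : K) : b * al x' * p * (q / al x') = b * (p * q).
  by field; apply: al_neq0.
by rewrite !al_cancel.
Qed.

Lemma corner_merged_eq psi a b : x0_pair a b ->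
  gauge_eq psi e1 -> gauge_eq psi e2 ->
  let y := brot_skip a b in
  be (bv T a) * (ep a * psi b) = be (bv T y) * (ep y * psi (wrot T y)).
Proof.
move=> ab g1 g2 /=; have ba := x0_pair_sym ab.
have [ga gb] : gauge_eq psi a /\ gauge_eq psi b by case: ab => [] [-> ->].
rewrite mulrA (x0_pair_merged ab) /brot_skip.
have [bb | nbb] := eqVneq (brot T b) b; last by rewrite -mulrA gb bv_brot.
move: gb; rewrite /gauge_eq /face_step bb (x0_pair_wrot ba) => /(mulfI (pairing_neq0 b)).
by move=> ->; rewrite -(x0_pair_merged ab) -mulrA ga bv_brot.
Qed.

Lemma gauge_merged_eq psi : (forall x, gauge_eq psi x) -> forall e, merged_eq psi e.
Proof.
move=> gauge e; rewrite /merged_eq.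
have merged_corner a b : x0_pair a b -> brot T e = a -> merged_eq psi e.
  move=> ab bea; rewrite /merged_eq (merged_brot_pair ab bea) -(corner_merged_eq ab) //.
  by rewrite gauge /face_step bea (x0_pair_wrot ab) -bea bv_brot.
have [bea | ne1] := eqVneq (brot T e) e1; first by apply: (merged_corner e1 e2); auto.
have [bea | ne2] := eqVneq (brot T e) e2; first by apply: (merged_corner e2 e1); auto.
by rewrite /merged_brot (negbTE ne1) (negbTE ne2) gauge bv_brot.
Qed.

Lemma merged_eq_gauge psi : gauge_eq psi e1 -> gauge_eq psi e2 ->
  (forall e, e != e1 -> e != e2 -> merged_eq psi e) -> forall x, gauge_eq psi x.
Proof.
move=> g1 g2 merged x.
have [-> | ne1] := eqVneq x e1; first by [].
have [-> | ne2] := eqVneq x e2; first by [].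
have corner a b : x0_pair a b -> brot T x = a -> merged_eq psi x -> gauge_eq psi x.
  move=> ab bxa; have bv_a : bv T a = bv T x by rewrite -bxa bv_brot.
  rewrite /merged_eq /gauge_eq /face_step bxa (merged_brot_pair ab bxa).
  rewrite -(corner_merged_eq ab) // (x0_pair_wrot ab) bv_a.
  exact: (mulfI (be_neq0 _)).
have := merged x ne1 ne2.
have [bx1 | nb1] := eqVneq (brot T x) e1; first by apply: (corner e1 e2); auto.
have [bx2 | nb2] := eqVneq (brot T x) e2; first by apply: (corner e2 e1); auto.
rewrite /merged_eq /merged_brot (negbTE nb1) (negbTE nb2) bv_brot //.
exact: (mulfI (be_neq0 _)).
Qed.

Lemma removal_gauge : face_gauge T -> face_gauge T'.
Proof.
case=> psi psi0 gauge; exists (restrict_gauge psi) => x.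
  by rewrite mulf_neq0 ?invr_eq0.
by apply/gauge_eq_removal/gauge_merged_eq.
Qed.

Definition corner_value (psi : Et T -> K) (a b : Et T) : K :=
  if brot T a != a then ep (brot T a) * psi (wrot T (brot T a)) / ep a
  else if brot T b != b then ep (brot T b) * psi (wrot T (brot T b)) / ep b
  else 1.

Lemma corner_extension psi : (forall e, psi e != 0) ->
  exists2 psi1 : Et T -> K, forall e, psi1 e != 0 &
  [/\ forall e, e != e1 -> e != e2 -> psi1 e = psi e,
      gauge_eq psi1 e1 & gauge_eq psi1 e2].
Proof.
move=> psi0; pose psi1 x :=
  if x == e1 then corner_value psi e1 e2
  else if x == e2 then corner_value psi e2 e1 else psi x.
have psi1_out e : e != e1 -> e != e2 -> psi1 e = psi e.
  by move=> ne1 ne2; rewrite /psi1 (negbTE ne1) (negbTE ne2).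
have psi1_pair a b : x0_pair a b -> psi1 a = corner_value psi a b.
  by case=> [] [-> ->]; rewrite /psi1 ?eqxx // eq_sym (negbTE e1_neq_e2).
have gauge_corner a b : x0_pair a b -> gauge_eq psi1 a.
  move=> ab; have ba := x0_pair_sym ab; rewrite /gauge_eq /face_step.
  rewrite (psi1_pair _ _ ab) /corner_value.
  have [baa | nbaa] := eqVneq (brot T a) a.
    by rewrite baa (x0_pair_wrot ab) (psi1_pair _ _ ba) /corner_value baa eqxx.
  have wa := x0_pair_wrot ab; have wb := x0_pair_wrot ba.
  have nb : wrot T (brot T a) != b by rewrite -[X in _ != X]wa (inj_eq perm_inj).
  have na : wrot T (brot T a) != a.
    rewrite -[X in _ != X]wb (inj_eq perm_inj).
    by apply: contraNneq (x0_pair_bv ab) => <-; rewrite bv_brot.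
  rewrite /= psi1_out; first by field.
  1, 2: by case: ab na nb => [] [-> ->].
have cv0 a b : corner_value psi a b != 0.
  rewrite /corner_value; do !case: ifP => _;
  by rewrite ?mulf_neq0 ?invr_eq0 ?oner_neq0 ?pairing_neq0 ?psi0.
exists psi1 => [e|]; last by split=> //; apply: gauge_corner; auto.
by rewrite /psi1; do !case: ifP => _.
Qed.

Lemma addition_gauge : face_gauge T' -> face_gauge T.
Proof.
case=> phi phi0 gauge.
pose psi x := if [pick x' | fE x' == x] is Some x' then al (wv T' x') * phi x' else 1.
have psi_fE x' : psi (fE x') = al (wv T' x') * phi x'.
  rewrite /psi; case: pickP => [y /eqP /fE_inj -> // | /(_ x')].
  by rewrite eqxx.
have psi0 x : psi x != 0.
  by rewrite /psi; case: pickP => [y _|_]; rewrite ?mulf_neq0 ?oner_neq0.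
have [psi1 psi10 [psi1_out g1 g2]] := corner_extension psi0.
have restrict_psi1 x' : restrict_gauge psi1 x' = phi x'.
  have [ne1 ne2] := fE_neq x'.
  by rewrite /restrict_gauge psi1_out // psi_fE mulrC mulKf.
exists psi1 => //; apply: merged_eq_gauge => // e ne1 ne2.
have [e' <-] := fE_onto ne1 ne2.
by apply/gauge_eq_removal; rewrite /gauge_eq !restrict_psi1; apply: gauge.
Qed.

End DegreeTwoRemoval.

Lemma remove_white_deg2_gauge (K : fieldType) (n : nat) (T T' : tiling K n) :
  is_tiling T -> is_tiling T' -> (forall e, edge_pairing T e != 0) ->
  remove_white_deg2 K n T T' -> face_gauge T <-> face_gauge T'.
Proof.
move=> tT tT' pe0.
case=> x0 [e1 [e2 [fE [fW [fB [[e12 wv1 wv2 x0_edges bv12] [fE_inj fE_neq fE_onto]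
  _ [_ fB_eq fE_ends] [fE_wrot fE_brot ptlab_T' hplab_T']]]]]]].
have [al al0 ptl] := proj_eq_scalars ptlab_T'.
have [be be0 hpl] := proj_eq_scalars hplab_T'.
have fB_merge : fB (bv T e1) = fB (bv T e2) by apply/fB_eq; apply: Or32.
split.
  exact: (removal_gauge tT tT' pe0 e12 wv1 wv2 x0_edges fB_merge fE_ends fE_wrot
    al0 ptl hpl).
exact: (addition_gauge tT tT' pe0 e12 wv1 wv2 x0_edges bv12 fE_inj fE_neq fE_onto
  fB_merge fE_ends fE_wrot al0 be0 ptl hpl).
Qed.

Section UrbanRenewal.
Variables (K : fieldType) (n : nat) (T T' : tiling K n).
Hypothesis tiling_T : is_tiling T.
Hypothesis pairing_neq0 : forall e, edge_pairing T e != 0.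
Hypothesis pairing_neq0' : forall e, edge_pairing T' e != 0.
Variables (phi : Et T -> K) (e1 : Et T).
Hypotheses (phi_neq0 : forall e, phi e != 0) (phi_gauge : forall e, gauge_eq phi e).

Local Notation ep := (edge_pairing T).
Local Notation ep' := (edge_pairing T').
Local Notation f1 := (brot T e1).
Local Notation e2 := (wrot T f1).
Local Notation f2 := (brot T e2).
Local Notation A := (wv T e1).
Local Notation B := (wv T e2).
Local Notation c := (bv T e1).
Local Notation d := (bv T e2).
Local Notation kept e := (e \notin [:: e1; f1; e2; f2]).

Hypotheses (quad_closed : wrot T f2 = e1) (A_neq_B : A != B) (c_neq_d : c != d).

Lemma wv_f1 : wv T f1 = B. Proof. by rewrite wv_wrot. Qed.
Lemma wv_f2 : wv T f2 = A.
Proof. by rewrite -[in RHS]quad_closed wv_wrot. Qed.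
Lemma bv_f1 : bv T f1 = c. Proof. by rewrite bv_brot. Qed.
Lemma bv_f2 : bv T f2 = d. Proof. by rewrite bv_brot. Qed.

Lemma quad_edges_neq :
  [/\ e1 != f1, e1 != e2 & e1 != f2] /\ [/\ f1 != e2, f1 != f2 & e2 != f2].
Proof.
split; split.
- by apply: contraNneq A_neq_B => h; rewrite -wv_f1 -h.
- by apply: contraNneq c_neq_d => h; rewrite -h.
- by apply: contraNneq c_neq_d => h; rewrite -bv_f2 -h.
- by apply: contraNneq c_neq_d => h; rewrite -bv_f1 -h.
- by apply: contraNneq c_neq_d => h; rewrite -bv_f1 -bv_f2 -h.
- by apply: contraNneq A_neq_B => h; rewrite -wv_f2 -h.
Qed.

Lemma keptE e : kept e = [&& e != e1, e != f1, e != e2 & e != f2].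
Proof. by rewrite !inE !negb_or. Qed.

Lemma quad_coherent : ep e1 * ep e2 = ep f1 * ep f2.
Proof.
have g1 := phi_gauge e1; have g2 := phi_gauge e2.
rewrite /gauge_eq /face_step quad_closed in g1 g2.
apply: (mulIf (phi_neq0 e1)); apply: (mulIf (phi_neq0 e2)).
transitivity ((ep e1 * phi e1) * (ep e2 * phi e2)); first by ring.
by rewrite g1 g2; ring.
Qed.

Variables (iE : Et T -> Et T') (iW : Wt T -> Wt T') (iB : Bt T -> Bt T').
Variables (xE xF : Wt T') (yg yh : Bt T').
Variables (nAg ncE nBh ndF ngE nEh nhF nFg : Et T').
Variables (al : Wt T -> K) (be : Bt T -> K).

Local Notation news := [:: nAg; ncE; nBh; ndF; ngE; nEh; nhF; nFg].
Local Notation vA := (ptlab T A).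
Local Notation vB := (ptlab T B).
Local Notation lc := (hplab T c).
Local Notation ld := (hplab T d).
Local Notation vE := (ptlab T' xE).
Local Notation vF := (ptlab T' xF).
Local Notation lg := (hplab T' yg).
Local Notation lh := (hplab T' yh).
Local Notation cd_meet := (hyperplane K n lc :&: hyperplane K n ld)%MS.

(* The edge of [T'] taking the place of [y] in the rotation around its white
   (resp. black) endpoint. *)
Definition white_slot (y : Et T) : Et T' :=
  if y == f2 then nAg else if y == f1 then nBh else iE y.
Definition black_slot (y : Et T) : Et T' :=
  if y == e1 then ncE else if y == e2 then ndF else iE y.

Hypothesis iE_inj : forall e e', kept e -> kept e' -> iE e = iE e' -> e = e'.
Hypothesis news_uniq : uniq news.
Hypothesis iE_notin_news : forall e, kept e -> iE e \notin news.
Hypothesis Et'_cover : forall e', e' \in news \/ exists2 e, kept e & iE e = e'.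
Hypothesis iE_ends :
  forall e, kept e -> wv T' (iE e) = iW (wv T e) /\ bv T' (iE e) = iB (bv T e).
Hypotheses (ends_nAg : wv T' nAg = iW A /\ bv T' nAg = yg)
  (ends_ncE : wv T' ncE = xE /\ bv T' ncE = iB c)
  (ends_nBh : wv T' nBh = iW B /\ bv T' nBh = yh)
  (ends_ndF : wv T' ndF = xF /\ bv T' ndF = iB d)
  (ends_ngE : wv T' ngE = xE /\ bv T' ngE = yg)
  (ends_nEh : wv T' nEh = xE /\ bv T' nEh = yh)
  (ends_nhF : wv T' nhF = xF /\ bv T' nhF = yh)
  (ends_nFg : wv T' nFg = xF /\ bv T' nFg = yg).
Hypotheses (wrot_kept : forall e, kept e -> wrot T' (iE e) = white_slot (wrot T e))
  (wrot_nAg : wrot T' nAg = if wrot T e1 == f2 then nAg else iE (wrot T e1))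
  (wrot_nBh : wrot T' nBh = if wrot T e2 == f1 then nBh else iE (wrot T e2))
  (wrot_ncE : wrot T' ncE = ngE) (wrot_ngE : wrot T' ngE = nEh)
  (wrot_nEh : wrot T' nEh = ncE) (wrot_ndF : wrot T' ndF = nhF)
  (wrot_nhF : wrot T' nhF = nFg) (wrot_nFg : wrot T' nFg = ndF).
Hypotheses (brot_kept : forall e, kept e -> brot T' (iE e) = black_slot (brot T e))
  (brot_ncE : brot T' ncE = if brot T f1 == e1 then ncE else iE (brot T f1))
  (brot_ndF : brot T' ndF = if brot T f2 == e2 then ndF else iE (brot T f2))
  (brot_ngE : brot T' ngE = nAg) (brot_nAg : brot T' nAg = nFg)
  (brot_nFg : brot T' nFg = ngE) (brot_nEh : brot T' nEh = nhF)
  (brot_nhF : brot T' nhF = nBh) (brot_nBh : brot T' nBh = nEh).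
Hypotheses (al_neq0 : forall x, al x != 0) (be_neq0 : forall y, be y != 0).
Hypothesis ptlab_iW : forall x, ptlab T' (iW x) = al x *: ptlab T x.
Hypothesis hplab_iB : forall y, hplab T' (iB y) = be y *: hplab T y.
Hypotheses (E_span : (vE <= <<vA>> + <<vB>>)%MS)
  (F_span : (vF <= <<vA>> + <<vB>>)%MS).
Hypotheses (g_cd : (cd_meet <= hyperplane K n lg)%MS)
  (h_cd : (cd_meet <= hyperplane K n lh)%MS).

Lemma ep_e1 : ep e1 = pairing lc vA. Proof. by []. Qed.
Lemma ep_e2 : ep e2 = pairing ld vB. Proof. by []. Qed.
Lemma ep_f1 : ep f1 = pairing lc vB. Proof. by rewrite /edge_pairing bv_f1 wv_f1. Qed.
Lemma ep_f2 : ep f2 = pairing ld vA. Proof. by rewrite /edge_pairing bv_f2 wv_f2. Qed.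

(* Every hyperplane through [c ∩ d] meets the line [AB] in the same point. *)
Lemma renewal_exchange l m v w :
  (cd_meet <= hyperplane K n l)%MS -> (cd_meet <= hyperplane K n m)%MS ->
  (v <= <<vA>> + <<vB>>)%MS -> (w <= <<vA>> + <<vB>>)%MS ->
  pairing l v * pairing m w = pairing l w * pairing m v.
Proof.
set Z := pairing lc vB *: vA + (- pairing lc vA) *: vB => cd_l cd_m.
have Z_cd : (Z <= cd_meet)%MS.
  rewrite sub_capmx !sub_hyperplane !pairing_comb -ep_e1 -ep_e2 -ep_f1 -ep_f2.
  by apply/andP; split; apply/eqP; rewrite -?quad_coherent; ring.
have Z_vanish p : (cd_meet <= hyperplane K n p)%MS -> pairing p Z = 0.
  by move=> cd_p; apply/eqP; rewrite -sub_hyperplane (submx_trans Z_cd).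
have b0 : - pairing lc vA != 0 by rewrite oppr_eq0 -ep_e1.
exact: pairing_exchange b0 (Z_vanish _ cd_l) (Z_vanish _ cd_m).
Qed.

Lemma ep'_ends e' x y :
  wv T' e' = x /\ bv T' e' = y -> ep' e' = pairing (hplab T' y) (ptlab T' x).
Proof. by rewrite /edge_pairing => -[-> ->]. Qed.

Lemma ep'_kept e : kept e -> ep' (iE e) = be (bv T e) * al (wv T e) * ep e.
Proof.
move=> ke; rewrite (ep'_ends (iE_ends ke)) ptlab_iW hplab_iB.
by rewrite pairingZl pairingZr mulrA.
Qed.

(* The values at the eight new edges; e.g. at [ncE] it is chosen so that
   [ep' ncE * renewal_gauge ncE = be c * ep f1 * phi f1], [ncE] replacing the
   pair [e1], [f1] around [c]. *)
Definition new_values : seq K :=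
  [:: phi f2 / al A; be c * ep f1 * phi f1 / ep' ncE; phi f1 / al B;
      be d * ep f2 * phi f2 / ep' ndF; be c * ep e1 * phi (wrot T e1) / ep' ncE;
      ep' nFg / ep' ngE; be d * ep e2 * phi (wrot T e2) / ep' ndF; 1].

Definition renewal_gauge (x : Et T') : K :=
  if x \in news then nth 1 new_values (index x news)
  else if [pick e | kept e && (iE e == x)] is Some e then phi e / al (wv T e)
  else 1.
Local Notation ph := renewal_gauge.

Lemma renewal_gauge_new i :
  (i < 8)%N -> ph (nth nAg news i) = nth 1 new_values i.
Proof. by move=> lt_i8; rewrite /renewal_gauge mem_nth // index_uniq. Qed.

Lemma renewal_gauge_kept e : kept e -> ph (iE e) = phi e / al (wv T e).
Proof.
move=> ke; rewrite /ph (negbTE (iE_notin_news ke)).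
case: pickP => [e0 /andP[ke0 /eqP /(iE_inj ke0 ke) -> //] | /(_ e)].
by rewrite ke eqxx.
Qed.

Lemma renewal_gauge_neq0 x : ph x != 0.
Proof.
rewrite /renewal_gauge; case: ifP => [x_new | _]; last first.
  by case: pickP => [e _ | _]; rewrite ?mulf_neq0 ?invr_eq0 ?oner_neq0.
have all_new : all (fun v => v != 0) new_values.
  by rewrite /= ?(mulf_neq0, invr_eq0, oner_neq0, phi_neq0, al_neq0, be_neq0,
                  pairing_neq0, pairing_neq0').
by apply: (all_nthP 1 all_new); rewrite -[size new_values]/(size news) index_mem.
Qed.

Lemma renewal_gauge_white_slot y : y != e1 -> y != e2 ->
  ph (white_slot y) = phi y / al (wv T y).
Proof.
move=> ne1 ne2; rewrite /white_slot.
have [-> | nf2] := eqVneq y f2; first by rewrite (renewal_gauge_new (i := 0)) // wv_f2.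
have [-> | nf1] := eqVneq y f1; first by rewrite (renewal_gauge_new (i := 2)) // wv_f1.
by rewrite renewal_gauge_kept // keptE ne1 nf1 ne2 nf2.
Qed.

Lemma black_slot_gauge y : y != f1 -> y != f2 ->
  ep' (black_slot y) * ph (wrot T' (black_slot y)) =
  be (bv T y) * (ep y * phi (wrot T y)).
Proof.
move=> nf1 nf2; rewrite /black_slot.
have [-> | ne1] := eqVneq y e1.
  by rewrite wrot_ncE (renewal_gauge_new (i := 4)) //=; field.
have [-> | ne2] := eqVneq y e2.
  by rewrite wrot_ndF (renewal_gauge_new (i := 6)) //=; field.
have ky : kept y by rewrite keptE ne1 nf1 ne2 nf2.
rewrite ep'_kept // wrot_kept // renewal_gauge_white_slot ?wv_wrot //.
- by field.
- by rewrite -quad_closed (inj_eq perm_inj).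
- by rewrite (inj_eq perm_inj).
Qed.

Lemma gauge_eq_transfer x y : y != e1 -> y != e2 ->
  ep' x * ph x = be (bv T y) * (ep y * phi y) ->
  brot T' x = black_slot (brot T y) -> gauge_eq ph x.
Proof.
move=> ne1 ne2 lhs brot_x; have := phi_gauge y.
rewrite /gauge_eq /face_step lhs brot_x black_slot_gauge ?(inj_eq perm_inj) //.
by rewrite bv_brot // => ->.
Qed.

Lemma gauge_eq_kept e : kept e -> gauge_eq ph (iE e).
Proof.
move=> ke; have := ke; rewrite keptE => /and4P[ne1 _ ne2 _].
apply: (gauge_eq_transfer ne1 ne2); last exact: brot_kept.
by rewrite ep'_kept // renewal_gauge_kept //; field.
Qed.

Lemma gauge_eq_ncE : gauge_eq ph ncE.
Proof.
have [[e1f1 _ _] [f1e2 _ _]] := quad_edges_neq.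
apply: (gauge_eq_transfer (y := f1)).
- by rewrite eq_sym.
- exact: f1e2.
- by rewrite (renewal_gauge_new (i := 1)) //= bv_f1; field.
rewrite brot_ncE /black_slot; case: ifP => // _.
suff /negbTE-> : brot T f1 != e2 by [].
by apply: contraNneq c_neq_d => <-; rewrite !bv_brot.
Qed.

Lemma gauge_eq_ndF : gauge_eq ph ndF.
Proof.
have [[_ _ e1f2] [_ _ e2f2]] := quad_edges_neq.
apply: (gauge_eq_transfer (y := f2)).
- by rewrite eq_sym.
- by rewrite eq_sym.
- by rewrite (renewal_gauge_new (i := 3)) //= bv_f2; field.
rewrite brot_ndF /black_slot.
have /negbTE-> : brot T f2 != e1.
  by apply: contraNneq c_neq_d => h; rewrite -bv_f2 -(bv_brot tiling_T f2) h.
by case: ifP.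
Qed.

Lemma cE_neq0 : pairing lc vE != 0.
Proof.
have := pairing_neq0' ncE; rewrite (ep'_ends ends_ncE) hplab_iB pairingZl.
by rewrite mulf_eq0 negb_or => /andP[].
Qed.

Lemma dF_neq0 : pairing ld vF != 0.
Proof.
have := pairing_neq0' ndF; rewrite (ep'_ends ends_ndF) hplab_iB pairingZl.
by rewrite mulf_eq0 negb_or => /andP[].
Qed.

Lemma gE_neq0 : pairing lg vE != 0.
Proof. by rewrite -(ep'_ends ends_ngE). Qed.

Lemma gauge_eq_nAg : gauge_eq ph nAg.
Proof.
rewrite /gauge_eq /face_step brot_nAg wrot_nFg.
rewrite (renewal_gauge_new (i := 0)) // (renewal_gauge_new (i := 3)) //=.
rewrite (ep'_ends ends_nAg) (ep'_ends ends_nFg) (ep'_ends ends_ndF).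
rewrite ptlab_iW hplab_iB pairingZr pairingZl ep_f2.
have := renewal_exchange g_cd (capmxSr _ _) (span2_subl _ _) F_span.
move=> xch; have dF0 := dF_neq0.
have -> : pairing lg vA = pairing lg vF * pairing ld vA / pairing ld vF.
  by rewrite -xch mulfK.
by field; rewrite dF0 be_neq0 al_neq0.
Qed.

Lemma gauge_eq_nBh : gauge_eq ph nBh.
Proof.
rewrite /gauge_eq /face_step brot_nBh wrot_nEh.
rewrite (renewal_gauge_new (i := 2)) // (renewal_gauge_new (i := 1)) //=.
rewrite (ep'_ends ends_nBh) (ep'_ends ends_nEh) (ep'_ends ends_ncE).
rewrite ptlab_iW hplab_iB pairingZr pairingZl ep_f1.
have := renewal_exchange h_cd (capmxSl _ _) (span2_subr _ _) E_span.
move=> xch; have cE0 := cE_neq0.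
have -> : pairing lh vB = pairing lh vE * pairing lc vB / pairing lc vE.
  by rewrite -xch mulfK.
by field; rewrite cE0 be_neq0 al_neq0.
Qed.

Lemma gauge_eq_nFg : gauge_eq ph nFg.
Proof.
rewrite /gauge_eq /face_step brot_nFg wrot_ngE.
rewrite (renewal_gauge_new (i := 7)) // (renewal_gauge_new (i := 5)) //=.
by field; rewrite pairing_neq0'.
Qed.

Lemma gauge_eq_nEh : gauge_eq ph nEh.
Proof.
rewrite /gauge_eq /face_step brot_nEh wrot_nhF.
rewrite (renewal_gauge_new (i := 5)) // (renewal_gauge_new (i := 7)) //=.
rewrite (ep'_ends ends_nEh) (ep'_ends ends_nFg) (ep'_ends ends_ngE).
rewrite (ep'_ends ends_nhF) mulr1 mulrA.
by rewrite (renewal_exchange h_cd g_cd E_span F_span) mulfK // gE_neq0.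
Qed.

Lemma gauge_eq_ngE : gauge_eq ph ngE.
Proof.
have [[_ _ e1f2] _] := quad_edges_neq.
have wv_w1 : wv T (wrot T e1) = A by rewrite wv_wrot.
have w1f1 : wrot T e1 != f1 by apply: contraNneq A_neq_B => h; rewrite -wv_w1 h wv_f1.
have w1e1 : wrot T e1 != e1.
  by rewrite -[X in _ != X]quad_closed (inj_eq perm_inj).
have w1e2 : wrot T e1 != e2 by apply: contraNneq A_neq_B => h; rewrite -wv_w1 h.
rewrite /gauge_eq /face_step brot_ngE.
have -> : wrot T' nAg = white_slot (wrot T e1).
  by rewrite wrot_nAg /white_slot (negbTE w1f1).
rewrite renewal_gauge_white_slot // wv_w1 (renewal_gauge_new (i := 4)) //=.
rewrite (ep'_ends ends_ngE) (ep'_ends ends_ncE) (ep'_ends ends_nAg).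
rewrite ptlab_iW hplab_iB pairingZr pairingZl ep_e1.
have := renewal_exchange g_cd (capmxSl _ _) E_span (span2_subl _ _).
move=> xch; have cE0 := cE_neq0.
have -> : pairing lg vA = pairing lg vE * pairing lc vA / pairing lc vE.
  by rewrite xch mulfK.
by field; rewrite cE0 be_neq0 al_neq0.
Qed.

Lemma gauge_eq_nhF : gauge_eq ph nhF.
Proof.
have [_ [f1e2 _ _]] := quad_edges_neq.
have wv_w2 : wv T (wrot T e2) = B by rewrite wv_wrot.
have w2f2 : wrot T e2 != f2 by apply: contraNneq A_neq_B => h; rewrite -wv_f2 -h wv_w2.
have w2e1 : wrot T e2 != e1.
  by apply: contraNneq A_neq_B => h; rewrite -{1}h wv_w2.
have w2e2 : wrot T e2 != e2 by rewrite (inj_eq perm_inj) eq_sym.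
rewrite /gauge_eq /face_step brot_nhF.
have -> : wrot T' nBh = white_slot (wrot T e2).
  by rewrite wrot_nBh /white_slot (negbTE w2f2).
rewrite renewal_gauge_white_slot // wv_w2 (renewal_gauge_new (i := 6)) //=.
rewrite (ep'_ends ends_nhF) (ep'_ends ends_ndF) (ep'_ends ends_nBh).
rewrite ptlab_iW hplab_iB pairingZr pairingZl ep_e2.
have := renewal_exchange h_cd (capmxSr _ _) F_span (span2_subr _ _).
move=> xch; have dF0 := dF_neq0.
have -> : pairing lh vB = pairing lh vF * pairing ld vB / pairing ld vF.
  by rewrite xch mulfK.
by field; rewrite dF0 be_neq0 al_neq0.
Qed.

Lemma urban_renewal_gauge : face_gauge T'.
Proof.
exists ph => [|x]; first exact: renewal_gauge_neq0.
have [|[e ke <-]] := Et'_cover x; last exact: gauge_eq_kept.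
rewrite !inE; do ![case/predU1P=> [-> | ] | move/eqP->].
all: by [ apply: gauge_eq_nAg | apply: gauge_eq_ncE | apply: gauge_eq_nBh
        | apply: gauge_eq_ndF | apply: gauge_eq_ngE | apply: gauge_eq_nEh
        | apply: gauge_eq_nhF | apply: gauge_eq_nFg ].
Qed.

End UrbanRenewal.

Lemma urban_renewal_face_gauge (K : fieldType) (n : nat) (T T' : tiling K n) :
  is_tiling T -> (forall e, edge_pairing T e != 0) ->
  (forall e, edge_pairing T' e != 0) ->
  urban_renewal T T' -> face_gauge T -> face_gauge T'.
Proof.
move=> tT pe0 pe0'.
case=> e1 /= [iE [iW [iB [xE [xF [yg [yh
  [nAg [ncE [nBh [ndF [ngE [nEh [nhF [nFg]]]]]]]]]]]]]]].
case=> [[quad_closed AB cd] [iE_inj news_uniq iE_notin_news Et'_cover]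
  [_ _ iE_ends [ends_nAg ends_ncE ends_nBh ends_ndF
                [ends_ngE ends_nEh ends_nhF ends_nFg]]]
  [[wrot_kept wrot_nAg wrot_nBh [wrot_ncE wrot_ngE wrot_nEh]
                                [wrot_ndF wrot_nhF wrot_nFg]]
   [brot_kept brot_ncE brot_ndF [brot_ngE brot_nAg brot_nFg]
                                [brot_nEh brot_nhF brot_nBh]]]
  [ptlab_iW hplab_iB [_ _ E_cap] [_ _ F_cap] [[_ _ g_join] [_ _ h_join]]]].
case=> phi phi0 gauge.
have [al al0 ptl] := proj_eq_scalars ptlab_iW.
have [be be0 hpl] := proj_eq_scalars hplab_iB.
move: E_cap F_cap; rewrite !sub_capmx => /andP[E_span _] /andP[F_span _].
have g_cd := submx_trans (addsmxSl _ _) g_join.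
have h_cd := submx_trans (addsmxSl _ _) h_join.
exact: (urban_renewal_gauge tT pe0 pe0' phi0 gauge quad_closed AB cd iE_inj
  news_uniq iE_notin_news Et'_cover iE_ends ends_nAg ends_ncE ends_nBh ends_ndF
  ends_ngE ends_nEh ends_nhF ends_nFg wrot_kept wrot_nAg wrot_nBh wrot_ncE
  wrot_ngE wrot_nEh wrot_ndF wrot_nhF wrot_nFg brot_kept brot_ncE brot_ndF
  brot_ngE brot_nAg brot_nFg brot_nEh brot_nhF brot_nBh al0 be0 ptl hpl
  E_span F_span g_cd h_cd).
Qed.

Theorem mainTheorem1 (d : nat) (T T' : tiling Cplx d.+1) :
  (2 <= d)%N ->
  is_tiling T -> double_circuit T -> coherent T ->
  (move_M1 T T' \/ urban_renewal T T') ->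
  is_tiling T' -> double_circuit T' ->
  (forall e : Et T', pairing (hplab T' (bv T' e)) (ptlab T' (wv T' e)) != 0) ->
  coherent T'.
Proof.
move=> _ tT _ coh M tT' _ pe0'.
have pe0 := coherent_edge_pairing_neq0 tT coh.
have gT := coherent_gauge tT coh.
apply/(coherent_gaugeP tT' pe0').
have [sT sT'] := (is_tiling_swap tT, is_tiling_swap tT').
have [spe0 spe0'] := (edge_pairing_swap_neq0 pe0, edge_pairing_swap_neq0 pe0').
case: M => [[rem | add | rem_sw | add_sw] | renewal].
- exact/(remove_white_deg2_gauge tT tT' pe0 rem).
- exact/(remove_white_deg2_gauge tT' tT pe0' add).
- apply/(face_gauge_swapP pe0')/(remove_white_deg2_gauge sT sT' spe0 rem_sw).
  exact/face_gauge_swapP.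
- apply/(face_gauge_swapP pe0')/(remove_white_deg2_gauge sT' sT spe0' add_sw).
  exact/face_gauge_swapP.
- exact: urban_renewal_face_gauge tT pe0 pe0' renewal gT.
Qed.
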